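(* Let $(E,\Sigma,m)$ be a $\sigma$-finite measure space and $L^1=L^1(E,\Sigma,m)$. Let $(A_0,\mathcal{D}(A_0))$ be the infinitesimal generator of a stochastic semigroup on $L^1$, let $\varphi\ge 0$ be a measurable function on $E$, and let $P\colon L^1\to L^1$ be a stochastic operator. Let $L^1_\varphi=\{u\in L^1:\int_E\varphi|u|\,dm<\infty\}$ and let $A u=A_0u-\varphi u$ be defined on a domain $\mathcal{D}(A)\subseteq\mathcal{D}(A_0)\cap L^1_\varphi$, and assume that $(A,\mathcal{D}(A))$ is the infinitesimal generator of a positive strongly continuous contraction semigroup on $L^1$. Denote by $R(\lambda,A)=(\lambda-A)^{-1}$ its resolvent. If for some $\lambda>0$ there is $v\in L^1$ with $v>0$ a.e. such that $P(\varphi R(\lambda,A)v)\le v$, then \[ \lim_{n\to\infty}\|(P(\varphi R(\lambda,A)))^n u\|=0\quad\text{for all } u\in L^1 . \]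
   Context: A linear operator $P\colon L^1\to L^1$ is stochastic if it maps the set of densities $D=\{u\in L^1: u\ge 0,\ \|u\|=1\}$ into itself. A stochastic semigroup is a strongly continuous semigroup of stochastic operators. Note that $\varphi R(\lambda,A)$ maps $L^1$ into $L^1$ since the range of $R(\lambda,A)$ is $\mathcal{D}(A)\subseteq L^1_\varphi$. *)

From HB Require Import structures.
From mathcomp Require Import all_boot all_order all_algebra.
From mathcomp Require Import all_classical all_reals all_analysis.
Set Implicit Arguments. Unset Strict Implicit. Unset Printing Implicit Defensive.
Import Order.TTheory GRing.Theory Num.Theory.
Import numFieldNormedType.Exports.
Local Open Scope classical_set_scope.
Local Open Scope ring_scope.

(* Elements of L^1(E,Sigma,m) are represented by real-valued functions that
   are m-integrable; two representatives denote the same element of L^1 iff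
   they agree m-a.e.  An operator on L^1 is represented by a map on functions
   that sends integrable functions to integrable functions and respects a.e.
   equality of integrable functions. *)
Section L1.
Context d (T : measurableType d) (R : realType) (mu : {measure set T -> \bar R}).

Definition Op := (T -> R) -> (T -> R).

Definition L1 (u : T -> R) : Prop := mu.-integrable setT (EFin \o u).

Definition L1norm (u : T -> R) : \bar R := (\int[mu]_x (`|u x|)%:E)%E.

Definition L1eq (u v : T -> R) : Prop := u = v %[ae mu].

Definition L1le (u v : T -> R) : Prop := {ae mu, forall x, u x <= v x}.

Definition L1_linear_op (P : Op) : Prop :=
  [/\ (forall u, L1 u -> L1 (P u)),
      (forall u v, L1 u -> L1 v -> L1eq u v -> L1eq (P u) (P v)) &
      (forall (a : R) u v, L1 u -> L1 v ->
          L1eq (P (fun x => a * u x + v x)) (fun x => a * P u x + P v x))].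

Definition L1_bounded_op (P : Op) : Prop :=
  L1_linear_op P /\
  exists C : R, forall u, L1 u -> (L1norm (P u) <= C%:E * L1norm u)%E.

Definition density (u : T -> R) : Prop :=
  L1 u /\ L1le (fun=> 0) u /\ L1norm u = 1%E.

Definition stochastic_op (P : Op) : Prop :=
  L1_linear_op P /\ (forall u, density u -> density (P u)).

Definition positive_op (P : Op) : Prop :=
  forall u, L1 u -> L1le (fun=> 0) u -> L1le (fun=> 0) (P u).

Definition contraction_op (P : Op) : Prop :=
  forall u, L1 u -> (L1norm (P u) <= L1norm u)%E.

Definition C0_semigroup (S : R -> Op) : Prop :=
  [/\ (forall t, 0 <= t -> L1_bounded_op (S t)),
      (forall u, L1 u -> L1eq (S 0 u) u),
      (forall t s u, 0 <= t -> 0 <= s -> L1 u ->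
          L1eq (S (t + s) u) (S t (S s u))) &
      (forall u t0, L1 u -> 0 <= t0 ->
         (fun s => L1norm (fun x => S s u x - S t0 u x))
           @ (within (fun s : R => 0 <= s) (nbhs t0)) --> 0%E)].

Definition stochastic_semigroup (S : R -> Op) : Prop :=
  C0_semigroup S /\ forall t, 0 <= t -> stochastic_op (S t).

Definition positive_contraction_semigroup (S : R -> Op) : Prop :=
  C0_semigroup S /\
  forall t, 0 <= t -> positive_op (S t) /\ contraction_op (S t).

Definition generator (S : R -> Op) (DA : set (T -> R)) (A : Op) : Prop :=
  (forall u, DA u <->
     (L1 u /\ exists g, L1 g /\
        (fun t => L1norm (fun x => (S t u x - u x) / t - g x))
          @ 0^'+ --> 0%E)) /\
  (forall u, DA u -> L1 (A u) /\
        (fun t => L1norm (fun x => (S t u x - u x) / t - A u x))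
          @ 0^'+ --> 0%E).

Definition resolvent_of (DA : set (T -> R)) (A : Op) (lambda : R) (Res : Op)
  : Prop :=
  L1_linear_op Res /\
  (forall v, L1 v -> DA (Res v) /\
      L1eq (fun x => lambda * Res v x - A (Res v) x) v) /\
  (forall u, DA u -> L1eq (Res (fun x => lambda * u x - A u x)) u).

End L1.

From HB Require Import structures.
From mathcomp Require Import all_boot all_order all_algebra.
From mathcomp Require Import all_classical all_reals all_analysis.
From mathcomp Require Import measurable_realfun ring lra.
Set Implicit Arguments. Unset Strict Implicit. Unset Printing Implicit Defensive.
Import Order.TTheory GRing.Theory Num.Theory.
Import numFieldNormedType.Exports.
Local Open Scope classical_set_scope.
Local Open Scope ring_scope.

(* Write K := P (phi R(lambda,A)).  Since the semigroup generated by A is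
   positive and contractive, R(lambda,A) is positive (a Kato-type argument
   with the indicator of {R f < 0}); since A0 generates a stochastic semigroup,
   int A0 w <= 0 for w >= 0, so integrating lambda w - A0 w + phi w = f gives
   int phi R f <= int f - lambda int R f.  Hence K is substochastic and, with
   v_n := K^n v and g_n := R(lambda,A) v_n, int v_n + lambda n int g_n <= int v
   (g_n decreases because v_n does).  Splitting phi at height k,
   int v_(n+1) = int phi g_n <= k int g_n + int (phi - k)^+ g_0, and both terms
   vanish (n -> oo, then k -> oo by dominated convergence).  Finally every u
   is L^1-close to a function bounded by k v, and K is an L^1 contraction. *)

Section real_sequences.
Variable R : realType.
Implicit Types a b c : nat -> R.

Lemma cvg0_le_harmonic b (C : R) : (forall n, 0 <= b n) ->
  (forall n, n%:R * b n <= C) -> b @ \oo --> 0.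
Proof.
move=> b0 bC; rewrite -cvg_shiftS.
have hC : (fun n => C * harmonic n) @ \oo --> 0.
  by rewrite -(mulr0 C); exact: cvgM (cvg_cst C) cvg_harmonic.
apply: (squeeze_cvgr _ (cvg_cst 0) hC); apply: nearW => n /=.
by rewrite b0 /= ler_pdivlMr// mulrC.
Qed.

Lemma cvg0_le_natmul_add a b c : (forall n, 0 <= a n) ->
  b @ \oo --> 0 -> c @ \oo --> 0 ->
  (forall n k, a n <= k%:R * b n + c k) -> a @ \oo --> 0.
Proof.
move=> a0 b0 c0 abc; apply/cvgr0Pnorm_le => e e0.
have e20 : 0 < e / 2 by rewrite divr_gt0.
have /cvgr0Pnorm_le/(_ _ e20)/filter_ex[k ck] := c0.
have kb : (fun n => k%:R * b n) @ \oo --> 0.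
  by rewrite -(mulr0 k%:R); exact: cvgM (cvg_cst _) b0.
near=> n; rewrite ger0_norm//.
have : `|k%:R * b n| <= e / 2 by near: n; move/cvgr0Pnorm_le: kb; exact.
have := abc n k; have := ler_norm (k%:R * b n); have := ler_norm (c k).
lra.
Unshelve. all: by end_near. Qed.

End real_sequences.

Definition cutoff (R : numDomainType) (c y : R) : R := if `|y| <= c then y else 0.

Section cutoff.
Variable R : numDomainType.
Implicit Types c y : R.

Lemma cutoff_id c y : `|y| <= c -> cutoff c y = y.
Proof. by rewrite /cutoff => ->. Qed.

Lemma norm_cutoff_le c y : 0 <= c -> `|cutoff c y| <= c.
Proof. by rewrite /cutoff; case: ifP; rewrite ?normr0. Qed.

Lemma norm_cutoff_le_norm c y : `|cutoff c y| <= `|y|.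
Proof. by rewrite /cutoff; case: ifP; rewrite ?normr0. Qed.

Lemma norm_sub_cutoff_le c y : `|y - cutoff c y| <= `|y|.
Proof. by rewrite /cutoff; case: ifP; rewrite ?subr0 ?subrr ?normr0. Qed.

End cutoff.

Section L1_functions.
Context d (T : measurableType d) (R : realType) (mu : {measure set T -> \bar R}).
Local Notation L1 := (L1 mu).
Implicit Types (u v w g : T -> R) (a : R).

Lemma L1_measurable u : L1 u -> measurable_fun setT u.
Proof. by move=> /integrableP[/measurable_EFinP]. Qed.

Lemma L1_lin a u v : L1 u -> L1 v -> L1 (fun x => a * u x + v x).
Proof.
move=> hu hv.
have : mu.-integrable setT (fun x => a%:E * (EFin \o u) x + (EFin \o v) x)%E.
  by apply: integrableD => //; exact: integrableZl.
by apply: eq_integrable => // x _ /=; rewrite EFinD EFinM.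
Qed.

Lemma L1_0 : L1 (fun=> 0).
Proof. exact: integrable0. Qed.

Lemma L1Z a u : L1 u -> L1 (fun x => a * u x).
Proof.
by move=> hu; apply: eq_integrable (L1_lin a hu L1_0) => // x _ /=; rewrite addr0.
Qed.

Lemma L1D u v : L1 u -> L1 v -> L1 (fun x => u x + v x).
Proof.
by move=> hu hv; apply: eq_integrable (L1_lin 1 hu hv) => // x _ /=; rewrite mul1r.
Qed.

Lemma L1B u v : L1 u -> L1 v -> L1 (fun x => u x - v x).
Proof.
move=> hu hv; apply: eq_integrable (L1_lin (-1) hv hu) => // x _ /=.
by rewrite mulN1r addrC.
Qed.

Lemma L1_norm u : L1 u -> L1 (fun x => `|u x|).
Proof. exact: integrable_norm. Qed.

Lemma L1_le_norm u g : measurable_fun setT u -> L1 g ->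
  (forall x, `|u x| <= `|g x|) -> L1 u.
Proof.
move=> mu' hg hug; apply: le_integrable hg => //; first exact/measurable_EFinP.
by move=> x _ /=; rewrite lee_fin.
Qed.

Lemma L1_mask (m h : T -> R) : measurable_fun setT m ->
  (forall x, `|m x| <= 1) -> L1 h -> L1 (fun x => m x * h x).
Proof.
move=> mm m1 hh; apply: (L1_le_norm _ hh) => [|x].
  by apply: measurable_funM => //; exact: L1_measurable.
by rewrite normrM -[leRHS]mul1r ler_wpM2r.
Qed.

Lemma aeS2 (P Q S : T -> Prop) : {ae mu, forall x, P x} ->
  {ae mu, forall x, Q x} -> (forall x, P x -> Q x -> S x) -> {ae mu, forall x, S x}.
Proof. by move=> hP hQ h; exact: filterS2 h hP hQ. Qed.

Lemma aeS3 (P Q U S : T -> Prop) : {ae mu, forall x, P x} ->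
  {ae mu, forall x, Q x} -> {ae mu, forall x, U x} ->
  (forall x, P x -> Q x -> U x -> S x) -> {ae mu, forall x, S x}.
Proof. by move=> hP hQ hU h; exact: filterS3 h hP hQ hU. Qed.

Lemma L1eqP u v : L1eq mu u v <-> {ae mu, forall x, u x = v x}.
Proof. by split; apply: filterS => x; [apply | move=> -> ]. Qed.

Lemma Rintegral_ae_eq u v : L1 u -> L1 v -> L1eq mu u v ->
  \int[mu]_x u x = \int[mu]_x v x.
Proof.
move=> hu hv huv; congr fine; apply: ae_eq_integral => //.
- by apply/measurable_EFinP; exact: L1_measurable.
- by apply/measurable_EFinP; exact: L1_measurable.
- by apply: filterS huv => x h /h ->.
Qed.

Lemma Rintegral_ae_ge0 u : L1 u -> L1le mu (fun=> 0) u -> 0 <= \int[mu]_x u x.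
Proof.
move=> hu hu0; have up0 := @funrpos_ge0 T R u.
have upL1 : L1 u^\+ by exact: integrable_funrpos.
rewrite (@Rintegral_ae_eq u u^\+)//; first exact: Rintegral_ge0.
by apply/L1eqP; apply: filterS hu0 => x /max_idPl.
Qed.

Lemma Rintegral_ae_le u v : L1 u -> L1 v -> L1le mu u v ->
  \int[mu]_x u x <= \int[mu]_x v x.
Proof.
move=> hu hv huv; rewrite -subr_ge0 -RintegralB//.
apply: Rintegral_ae_ge0; first exact: L1B.
by apply: filterS huv => x; rewrite subr_ge0.
Qed.

Lemma L1norm_Rintegral u : L1 u -> L1norm mu u = (\int[mu]_x `|u x|)%:E.
Proof.
by move=> /L1_norm hu; rewrite /L1norm /Rintegral fineK//; exact: integrable_fin_num.
Qed.

Lemma Rintegral_norm_eq0 u : L1 u -> \int[mu]_x `|u x| = 0 ->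
  {ae mu, forall x, u x = 0}.
Proof.
move=> hu h0; have : (\int[mu]_x `|(EFin \o u) x|)%E = 0%E.
  by rewrite -[LHS]/(L1norm mu u) L1norm_Rintegral// h0.
move/(ae_eq_integral_abs mu measurableT (measurable_int mu hu)).
by apply: filterS => x h; case: (h I).
Qed.

Lemma Rintegral_norm_ae_ge0 u : L1 u -> L1le mu (fun=> 0) u ->
  \int[mu]_x `|u x| = \int[mu]_x u x.
Proof.
move=> hu h0; apply: Rintegral_ae_eq => //; first exact: L1_norm.
by apply/L1eqP; apply: filterS h0 => x /ger0_norm.
Qed.

End L1_functions.

Section L1_operators.
Context d (T : measurableType d) (R : realType) (mu : {measure set T -> \bar R}).
Local Notation L1 := (L1 mu).
Implicit Types (Q : Op T R) (u v w g : T -> R) (a : R).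

Section linear_op.
Variable Q : Op T R.
Hypothesis hQ : L1_linear_op mu Q.

Lemma linear_op_L1 u : L1 u -> L1 (Q u).
Proof. by case: hQ => h _ _; exact: h. Qed.

Lemma linear_op_ae_eq u v : L1 u -> L1 v -> L1eq mu u v -> L1eq mu (Q u) (Q v).
Proof. by case: hQ => _ h _; exact: h. Qed.

Lemma linear_op_lin a u v : L1 u -> L1 v ->
  {ae mu, forall x, Q (fun x => a * u x + v x) x = a * Q u x + Q v x}.
Proof. by case: hQ => _ _ h hu hv; apply/L1eqP; exact: h. Qed.

Lemma linear_op0 : {ae mu, forall x, Q (fun=> 0) x = 0}.
Proof.
have := linear_op_lin (-1) (L1_0 mu) (L1_0 mu).
rewrite (_ : (fun=> _) = fun=> 0); last by apply/funext => x; rewrite mulr0 addr0.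
by apply: filterS => x ->; rewrite mulN1r addNr.
Qed.

Lemma linear_opZ a u : L1 u ->
  {ae mu, forall x, Q (fun x => a * u x) x = a * Q u x}.
Proof.
move=> hu; have := linear_op_lin a hu (L1_0 mu).
rewrite (_ : (fun x => _) = fun x => a * u x); last by apply/funext => x; rewrite addr0.
by move/aeS2/(_ linear_op0); apply=> x -> ->; rewrite addr0.
Qed.

Lemma linear_opD u v : L1 u -> L1 v ->
  {ae mu, forall x, Q (fun x => u x + v x) x = Q u x + Q v x}.
Proof.
move=> hu hv; have := linear_op_lin 1 hu hv.
rewrite (_ : (fun x => _) = fun x => u x + v x); last by apply/funext => x; rewrite mul1r.
by apply: filterS => x ->; rewrite mul1r.
Qed.

Lemma linear_opB u v : L1 u -> L1 v ->
  {ae mu, forall x, Q (fun x => u x - v x) x = Q u x - Q v x}.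
Proof.
move=> hu hv; have := linear_op_lin (-1) hv hu.
rewrite (_ : (fun x => _) = fun x => u x - v x).
  by apply: filterS => x ->; rewrite mulN1r addrC.
by apply/funext => x; rewrite mulN1r addrC.
Qed.

End linear_op.

Definition positive_linear_op Q := L1_linear_op mu Q /\ positive_op mu Q.

Section positive_linear_op.
Variable Q : Op T R.
Hypothesis hQ : positive_linear_op Q.

Lemma positive_op_le u v : L1 u -> L1 v -> L1le mu u v -> L1le mu (Q u) (Q v).
Proof.
move=> hu hv huv; have vu0 : L1le mu (fun=> 0) (fun x => v x - u x).
  by apply: filterS huv => x; rewrite subr_ge0.
apply: (aeS2 (hQ.2 _ (L1B hv hu) vu0) (linear_opB hQ.1 hv hu)) => x.
by move=> + e; rewrite e subr_ge0.
Qed.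

Lemma positive_op_norm u : L1 u ->
  {ae mu, forall x, `|Q u x| <= Q (fun x => `|u x|) x}.
Proof.
move=> hu; have hau := L1_norm hu.
have h1 : L1le mu (fun=> 0) (fun x => `|u x| - u x).
  by apply: aeW => x; rewrite subr_ge0 ler_norm.
have h2 : L1le mu (fun=> 0) (fun x => `|u x| + u x).
  by apply: aeW => x; rewrite -lerBlDr sub0r -normrN ler_norm.
have g1 := hQ.2 _ (L1B hau hu) h1; have g2 := hQ.2 _ (L1D hau hu) h2.
refine (aeS3 (aeS2 g1 g2 (fun x p q => conj p q))
  (linear_opB hQ.1 hau hu) (linear_opD hQ.1 hau hu) _).
move=> x [+ +] e1 e2; rewrite e1 e2 subr_ge0 ler_norml => -> h.
by rewrite andbT -subr_ge0 opprK addrC.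
Qed.

Lemma positive_op_Rintegral_norm_le w g : L1 w -> L1 g -> (forall x, `|w x| <= g x) ->
  \int[mu]_x `|Q w x| <= \int[mu]_x Q g x.
Proof.
move=> hw hg wg; have QL1 := linear_op_L1 hQ.1.
apply: Rintegral_ae_le; [exact/L1_norm/QL1 | exact: QL1 |].
have wg' : L1le mu (fun x => `|w x|) g by exact: aeW.
exact: aeS2 (positive_op_norm hw) (positive_op_le (L1_norm hw) hg wg')
  (fun x p q => le_trans p q).
Qed.

End positive_linear_op.

Lemma positive_linear_op_id : positive_linear_op id.
Proof.
split; first split.
- by [].
- by [].
- by move=> a u v _ _; apply/L1eqP; exact: aeW.
- by [].
Qed.

Lemma positive_linear_op_comp Q1 Q2 : positive_linear_op Q1 ->
  positive_linear_op Q2 -> positive_linear_op (fun u => Q1 (Q2 u)).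
Proof.
move=> [l1 p1] [l2 p2]; have Q1L1 := linear_op_L1 l1; have Q2L1 := linear_op_L1 l2.
split; first split.
- by move=> u /Q2L1/Q1L1.
- move=> u v hu hv /(linear_op_ae_eq l2 hu hv).
  by apply: (linear_op_ae_eq l1); exact: Q2L1.
- move=> a u v hu hv; apply/L1eqP.
  have /L1eqP e2 : L1eq mu (Q1 (Q2 (fun x => a * u x + v x)))
      (Q1 (fun x => a * Q2 u x + Q2 v x)).
    apply: (linear_op_ae_eq l1).
    - by apply: Q2L1; exact: L1_lin.
    - by apply: L1_lin; exact: Q2L1.
    - exact/L1eqP/(linear_op_lin l2).
  by apply: (aeS2 e2 (linear_op_lin l1 a (Q2L1 _ hu) (Q2L1 _ hv))) => x -> ->.
- by move=> u hu /(p2 _ hu); apply: p1; exact: Q2L1.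
Qed.

Lemma stochastic_op_mass Q u : stochastic_op mu Q -> L1 u -> L1le mu (fun=> 0) u ->
  L1le mu (fun=> 0) (Q u) /\ \int[mu]_x Q u x = \int[mu]_x u x.
Proof.
move=> [hl hd] hu hu0; have QL1 := linear_op_L1 hl.
have [Iu0|Iu_neq0] := eqVneq (\int[mu]_x u x) 0.
  have /L1eqP Qu0 : L1eq mu (Q u) (Q (fun=> 0)).
    apply: linear_op_ae_eq (L1_0 mu) _ => //; apply/L1eqP.
    by apply: Rintegral_norm_eq0; rewrite ?Rintegral_norm_ae_ge0.
  have {}Qu0 := aeS2 Qu0 (linear_op0 hl) (fun x p q => etrans p q).
  split; first by apply: filterS Qu0 => x ->.
  rewrite Iu0 (Rintegral_ae_eq (QL1 _ hu) (L1_0 mu)); last exact/L1eqP.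
  by rewrite Rintegral_cst// mul0r.
set c := \int[mu]_x u x.
have c_gt0 : 0 < c by rewrite lt_neqAle eq_sym Iu_neq0 Rintegral_ae_ge0.
have u'L1 : L1 (fun x => c^-1 * u x) by exact: L1Z.
have u'0 : L1le mu (fun=> 0) (fun x => c^-1 * u x).
  by apply: filterS hu0 => x; apply: mulr_ge0; rewrite invr_ge0 ltW.
have [Qu'L1 [Qu'0 Qu'1]] : density mu (Q (fun x => c^-1 * u x)).
  apply: hd; split => //; split => //.
  rewrite L1norm_Rintegral// Rintegral_norm_ae_ge0// RintegralZl//.
  by rewrite mulVf ?gt_eqF.
rewrite L1norm_Rintegral// Rintegral_norm_ae_ge0// in Qu'1; case: Qu'1 => IQu'.
have uE : u = (fun x => c * (c^-1 * u x)).
  by apply/funext => x; rewrite mulrA mulfV ?gt_eqF ?mul1r.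
have QuE := linear_opZ hl c u'L1; rewrite -uE in QuE.
split; first by apply: (aeS2 QuE Qu'0) => x -> h; exact: mulr_ge0 (ltW c_gt0) h.
rewrite (Rintegral_ae_eq (QL1 _ hu) (L1Z c Qu'L1)); last exact/L1eqP.
by rewrite RintegralZl// IQu' mulr1.
Qed.

Definition substochastic_op Q := positive_linear_op Q /\
  forall u, L1 u -> L1le mu (fun=> 0) u -> \int[mu]_x Q u x <= \int[mu]_x u x.

Lemma stochastic_substochastic Q : stochastic_op mu Q -> substochastic_op Q.
Proof.
move=> hQ; split; first split; first by case: hQ.
  by move=> u hu hu0; have [] := stochastic_op_mass hQ hu hu0.
by move=> u hu hu0; have [_ ->] := stochastic_op_mass hQ hu hu0.
Qed.

Lemma substochastic_contraction Q u : substochastic_op Q -> L1 u ->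
  \int[mu]_x `|Q u x| <= \int[mu]_x `|u x|.
Proof.
move=> [hp hs] hu; have hau := L1_norm hu.
apply: le_trans (hs _ hau _); last by apply: aeW => x.
by apply: (positive_op_Rintegral_norm_le hp hu hau) => x.
Qed.

Lemma substochastic_comp Q1 Q2 : substochastic_op Q1 -> substochastic_op Q2 ->
  substochastic_op (fun u => Q1 (Q2 u)).
Proof.
move=> [p1 s1] [p2 s2]; split; first exact: positive_linear_op_comp.
move=> u hu hu0; apply: le_trans (s2 _ hu hu0); apply: s1.
  exact: (linear_op_L1 p2.1 hu).
exact: p2.2.
Qed.

Lemma substochastic_iter Q n : substochastic_op Q -> substochastic_op (iter n Q).
Proof.
move=> hQ; elim: n => [|n IH]; last exact: substochastic_comp.
by split; [exact: positive_linear_op_id | move=> u _ _].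
Qed.

End L1_operators.

Section L1_convergence.
Context d (T : measurableType d) (R : realType) (mu : {measure set T -> \bar R}).
Local Notation L1 := (L1 mu).
Implicit Types (f u v g : T -> R).

Lemma dominated_cvg0 (h : nat -> T -> R) g :
  (forall n, measurable_fun setT (h n)) -> L1 g ->
  (forall n x, `|h n x| <= g x) ->
  {ae mu, forall x, h n x @[n --> \oo] --> 0} ->
  (fun n => \int[mu]_x `|h n x|) @ \oo --> 0.
Proof.
move=> mh hg hle hc.
have [] := @dominated_convergence _ T R mu setT measurableT (fun n => EFin \o h n)
  (cst 0%E) (EFin \o g).
- by move=> n; apply/measurable_EFinP.
- exact: measurable_cst.
- apply: filterS hc => x hx _.
  by apply: cvg_EFin; [exact: nearW | exact: hx].
- exact: hg.
- by apply: aeW => x n _ /=; rewrite lee_fin.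
move=> _ /fine_cvg + _.
rewrite (_ : fine \o _ = fun n => \int[mu]_x `|h n x|); first exact.
apply/funext => n /=; congr fine.
by apply: eq_integral => x _ /=; rewrite subr0.
Qed.

Lemma measurable_cutoff f u : measurable_fun setT f -> measurable_fun setT u ->
  measurable_fun setT (fun x => cutoff (f x) (u x)).
Proof.
move=> mf mu'; apply: measurable_fun_ifT => //.
by apply: measurable_fun_ler => //; exact: measurableT_comp.
Qed.

Lemma cutoff_cvg0 u g : L1 u -> measurable_fun setT g ->
  {ae mu, forall x, 0 < g x} ->
  (fun k => \int[mu]_x `|u x - cutoff (k%:R * g x) (u x)|) @ \oo --> 0.
Proof.
move=> hu mg g_gt0; have mu' := L1_measurable hu.
apply: (dominated_cvg0 _ (L1_norm hu)) => [k|k x|].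
- apply: measurable_funB => //; apply: measurable_cutoff => //.
  exact: measurable_funM.
- exact: norm_sub_cutoff_le.
- apply: filterS g_gt0 => x gx; apply: cvg_near_cst; near=> k.
  rewrite cutoff_id ?subrr// -ler_pdivrMr//.
  by near: k; exact: nbhs_infty_ger.
Unshelve. all: by end_near. Qed.

Lemma Rintegral_mask_ge_of_cvg (F : R -> T -> R) (m g : T -> R) (c : R) :
  measurable_fun setT m -> (forall x, `|m x| <= 1) -> L1 g ->
  (\forall t \near 0^'+, L1 (F t) /\ c <= \int[mu]_x (m x * F t x)) ->
  (fun t => L1norm mu (fun x => F t x - g x)) @ 0^'+ --> 0%E ->
  c <= \int[mu]_x (m x * g x).
Proof.
move=> mm m1 hg hF hcvg; apply/ler_addgt0Pr => e e_gt0.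
have hn : \forall t \near 0^'+, (L1norm mu (fun x => (F t x - g x)%R) < e%:E)%E.
  by apply: (hcvg (fun y => y < e%:E)%E); apply: open_ereal_lt'; rewrite lte_fin.
have [t [[Ft cFt] Fg_lt]] : exists t, (L1 (F t) /\
    c <= \int[mu]_x (m x * F t x)) /\ (L1norm mu (fun x => (F t x - g x)%R) < e%:E)%E.
  by apply: (@filter_ex _ _ (at_right_proper_filter 0)); near=> t; split; near: t.
rewrite L1norm_Rintegral ?lte_fin in Fg_lt; last exact: L1B.
have : \int[mu]_x (m x * F t x) - \int[mu]_x (m x * g x)
    <= \int[mu]_x `|F t x - g x|.
  have mFL1 := L1_mask mm m1 Ft; have mgL1 := L1_mask mm m1 hg.
  rewrite -RintegralB//; apply: le_trans (ler_norm _) _.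
  apply: le_trans (le_normr_Rintegral _ _) _ => //; first exact: L1B.
  apply: le_Rintegral => //; [exact/L1_norm/L1B | exact/L1_norm/L1B |].
  by move=> x _; rewrite -mulrBr normrM -[leRHS]mul1r ler_wpM2r.
lra.
Unshelve. all: by end_near. Qed.

Lemma substochastic_Rintegral_norm_le (Q : Op T R) u w g : substochastic_op mu Q ->
  L1 u -> L1 w -> L1 g -> (forall x, `|w x| <= g x) ->
  \int[mu]_x `|Q u x| <= \int[mu]_x Q g x + \int[mu]_x `|u x - w x|.
Proof.
move=> hQ hu hw hg wg; have [[hl hp] _] := hQ; have QL1 := linear_op_L1 hl.
have dL1 := L1B hu hw; have QuE := linear_opD hl hw dL1.
rewrite (_ : (fun x => _) = u) in QuE; last by apply/funext => x; rewrite addrC subrK.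
apply: (@le_trans _ _ (\int[mu]_x (`|Q w x| + `|Q (fun x => u x - w x) x|))).
  apply: Rintegral_ae_le; [exact/L1_norm/QL1 | by apply: L1D; exact/L1_norm/QL1 |].
  by apply: filterS QuE => x ->; exact: ler_normD.
rewrite RintegralD; [|by []|exact/L1_norm/QL1|exact/L1_norm/QL1].
apply: lerD; last exact: substochastic_contraction hQ dL1.
exact: (positive_op_Rintegral_norm_le (conj hl hp) hw hg wg).
Qed.

Lemma substochastic_iter_cvg0 (Q : Op T R) v : substochastic_op mu Q -> L1 v ->
  {ae mu, forall x, 0 < v x} ->
  (fun n => \int[mu]_x iter n Q v x) @ \oo --> 0 ->
  forall u, L1 u -> (fun n => \int[mu]_x `|iter n Q u x|) @ \oo --> 0.
Proof.
move=> hQ hv v_gt0 Qv0 u hu.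
have mv := measurableT_comp (@normr_measurable _ _) (L1_measurable hv).
pose ut k x := cutoff (k%:R * `|v x|) (u x).
have utL1 k : L1 (ut k).
  apply: (L1_le_norm _ hu) => [|x]; last exact: norm_cutoff_le_norm.
  apply: measurable_cutoff; last exact: L1_measurable hu.
  exact: measurable_funM (measurable_cst _) mv.
have v'_gt0 : {ae mu, forall x, 0 < `|v x|}.
  by apply: filterS v_gt0 => x vx; exact: lt_le_trans vx (ler_norm _).
apply: (cvg0_le_natmul_add _ Qv0 (cutoff_cvg0 hu mv v'_gt0)) => [n|n k].
  exact: Rintegral_ge0.
have hQn := substochastic_iter n hQ; have [[hl _] _] := hQn.
have QL1 := linear_op_L1 hl; have kvL1 : L1 (fun x => k%:R * `|v x|).
  exact/L1Z/L1_norm.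
apply: le_trans (substochastic_Rintegral_norm_le hQn hu (utL1 k) kvL1 _) _.
  by move=> x; apply: norm_cutoff_le; rewrite mulr_ge0.
rewrite -RintegralZl//; last exact: QL1.
rewrite (Rintegral_ae_eq (QL1 _ kvL1) (L1Z k%:R (QL1 _ hv)))//.
have /L1eqP vE : L1eq mu (iter n Q (fun x => `|v x|)) (iter n Q v).
  apply: linear_op_ae_eq => //; first exact: L1_norm.
  by apply/L1eqP; apply: filterS v_gt0 => x /gtr0_norm.
by apply/L1eqP; apply: (aeS2 (linear_opZ hl k%:R (L1_norm hv)) vE) => x -> ->.
Qed.

End L1_convergence.

Section generator.
Context d (T : measurableType d) (R : realType) (mu : {measure set T -> \bar R}).
Local Notation L1 := (L1 mu).
Implicit Types (m w z : T -> R) (t : R).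

Lemma L1_diff_quotient t z w : L1 z -> L1 w -> L1 (fun x => (z x - w x) / t).
Proof.
move=> hz hw; apply: eq_integrable (L1Z t^-1 (L1B hz hw)) => // x _ /=.
by rewrite mulrC.
Qed.

Lemma Rintegral_mask_diff_quotient m t z w : measurable_fun setT m ->
  (forall x, `|m x| <= 1) -> L1 z -> L1 w ->
  \int[mu]_x (m x * ((z x - w x) / t)) =
  t^-1 * (\int[mu]_x (m x * z x) - \int[mu]_x (m x * w x)).
Proof.
move=> mm m1 hz hw; have mzL1 := L1_mask mm m1 hz; have mwL1 := L1_mask mm m1 hw.
rewrite (@eq_Rintegral _ _ _ _ _ (fun x => t^-1 * (m x * z x - m x * w x))).
  by rewrite RintegralZl ?RintegralB//; exact: L1B.
by move=> x _; ring.
Qed.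

Lemma generator_mask_ge0 (S : R -> Op T R) (DA : set (T -> R)) (A : Op T R) w m :
  generator mu S DA A -> DA w -> measurable_fun setT m -> (forall x, `|m x| <= 1) ->
  (\forall t \near 0^'+, L1 (S t w) /\
     \int[mu]_x (m x * w x) <= \int[mu]_x (m x * S t w x)) ->
  0 <= \int[mu]_x (m x * A w x).
Proof.
move=> [hD hA] hw mm m1 hSw.
have [wL1 _] := (hD w).1 hw; have [AL1 Acvg] := hA w hw.
apply: (Rintegral_mask_ge_of_cvg mm m1 AL1 _ Acvg); near=> t.
have t_gt0 : 0 < t by near: t; exact: nbhs_right_gt.
have [SwL1 le_mSw] : L1 (S t w) /\
    \int[mu]_x (m x * w x) <= \int[mu]_x (m x * S t w x) by near: t.
split; first exact: L1_diff_quotient.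
by rewrite Rintegral_mask_diff_quotient// mulr_ge0 ?invr_ge0 ?subr_ge0// ltW.
Unshelve. all: by end_near. Qed.

Lemma positive_contraction_mask_ge (Q : Op T R) w m :
  positive_linear_op mu Q ->
  (forall u, L1 u -> \int[mu]_x `|Q u x| <= \int[mu]_x `|u x|) ->
  measurable_fun setT m -> (forall x, 0 <= m x <= 1) -> L1 w ->
  - (\int[mu]_x w^\- x) <= \int[mu]_x (m x * Q w x).
Proof.
move=> [hl hp] hc mm m01 hw; have QL1 := linear_op_L1 hl.
have wnL1 : L1 w^\- by exact: integrable_funrneg.
have m1 x : `|m x| <= 1 by have /andP[m0 m1] := m01 x; rewrite ger0_norm.
have Qw_ge : L1le mu (fun x => -1 * `|Q w^\- x|) (fun x => m x * Q w x).
  have w_wn0 : L1le mu (fun=> 0) (fun x => w x + w^\- x).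
    apply: aeW => x; have : - w x <= w^\- x by rewrite /funrneg le_max lexx.
    lra.
  apply: (aeS2 (hp _ (L1D hw wnL1) w_wn0) (linear_opD hl hw wnL1)) => x + e.
  rewrite /= e mulN1r -lerBlDr sub0r => Qw_ge; have /andP[m0 m1'] := m01 x.
  have [Qw0|Qw_lt0] := leP 0 (Q w x).
    by rewrite (le_trans _ (mulr_ge0 m0 Qw0))// oppr_le0.
  apply: le_trans (ler_wnM2r (ltW Qw_lt0) m1') ; rewrite mul1r.
  by apply: le_trans Qw_ge; rewrite lerN2 ler_norm.
have QwnL1 := L1_norm (QL1 _ wnL1).
apply: le_trans (Rintegral_ae_le (L1Z (-1) QwnL1) (L1_mask mm m1 (QL1 _ hw)) Qw_ge).
rewrite RintegralZl// mulN1r lerN2 -(Rintegral_norm_ae_ge0 wnL1); last exact: aeW.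
exact: hc.
Qed.

Lemma Rintegral_mask_lt0 w : L1 w ->
  \int[mu]_x ((if w x < 0 then 1 else 0) * w x) = - (\int[mu]_x w^\- x).
Proof.
move=> hw; rewrite -mulN1r -RintegralZl//; last exact: integrable_funrneg.
apply: eq_Rintegral => x _; rewrite /funrneg; case: ltP => [w_lt0|w_ge0].
  by rewrite mul1r max_l ?mulN1r ?opprK// oppr_ge0 ltW.
by rewrite mul0r max_r ?mulr0// oppr_le0.
Qed.

Lemma Rintegral_funrneg_eq0 w : L1 w -> \int[mu]_x w^\- x = 0 ->
  L1le mu (fun=> 0) w.
Proof.
move=> hw; have wnL1 : L1 w^\- by exact: integrable_funrneg.
rewrite -(Rintegral_norm_ae_ge0 wnL1); last exact: aeW.
move/(Rintegral_norm_eq0 wnL1); apply: filterS => x.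
by rewrite /funrneg => /max_idPr; rewrite oppr_le0.
Qed.

End generator.

Section semigroups.
Context d (T : measurableType d) (R : realType) (mu : {measure set T -> \bar R}).
Local Notation L1 := (L1 mu).
Variables (S : R -> Op T R) (DA : set (T -> R)) (A : Op T R).
Hypothesis hgen : generator mu S DA A.

Lemma positive_contraction_semigroupP t : positive_contraction_semigroup mu S ->
  0 <= t -> positive_linear_op mu (S t) /\
  forall u, L1 u -> \int[mu]_x `|S t u x| <= \int[mu]_x `|u x|.
Proof.
move=> [[hb _ _ _] hpc] t0; have [hl _] := hb t t0; have [hp hc] := hpc t t0.
split=> // u hu; have := hc u hu.
by rewrite !L1norm_Rintegral ?lee_fin//; exact: (linear_op_L1 hl hu).
Qed.

Lemma positive_contraction_generator_ge0 (lambda : R) w :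
  positive_contraction_semigroup mu S -> 0 < lambda -> DA w ->
  L1le mu (fun=> 0) (fun x => lambda * w x - A w x) -> L1le mu (fun=> 0) w.
Proof.
move=> hS l_gt0 hw hlw.
have [wL1 _] := (hgen.1 w).1 hw; have AL1 := (hgen.2 w hw).1.
pose m x : R := if w x < 0 then 1 else 0.
have mm : measurable_fun setT m.
  apply: measurable_fun_ifT => //; apply: measurable_fun_ltr => //.
  exact: L1_measurable wL1.
have m01 x : 0 <= m x <= 1 by rewrite /m; case: ifP; rewrite ?lexx ?ler01.
have m1 x : `|m x| <= 1 by have /andP[m0 m1] := m01 x; rewrite ger0_norm.
have mwL1 := L1_mask mm m1 wL1; have mAL1 := L1_mask mm m1 AL1.
have mAw_ge0 : 0 <= \int[mu]_x (m x * A w x).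
  apply: (generator_mask_ge0 hgen hw mm m1); near=> t.
  have t_ge0 : 0 <= t by apply: ltW; near: t; exact: nbhs_right_gt.
  have [hSt hc] := positive_contraction_semigroupP hS t_ge0.
  split; first exact: (linear_op_L1 hSt.1 wL1).
  by rewrite Rintegral_mask_lt0//; exact: positive_contraction_mask_ge.
have : 0 <= \int[mu]_x (m x * (lambda * w x - A w x)).
  apply: Rintegral_ae_ge0; first by apply: L1_mask => //; apply: L1B AL1; exact: L1Z.
  by apply: filterS hlw => x; apply: mulr_ge0; have /andP[] := m01 x.
rewrite (@eq_Rintegral _ _ _ _ _
  (fun x => lambda * (m x * w x) - m x * A w x)); last by move=> x _; ring.
rewrite RintegralB ?RintegralZl ?Rintegral_mask_lt0//; last exact: L1Z.
move=> ineq; apply: Rintegral_funrneg_eq0 => //.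
have : 0 <= \int[mu]_x w^\- x by exact: Rintegral_ge0.
nra.
Unshelve. all: by end_near. Qed.

Lemma stochastic_generator_Rintegral_le0 w : stochastic_semigroup mu S -> DA w ->
  L1le mu (fun=> 0) w -> \int[mu]_x A w x <= 0.
Proof.
move=> [_ hst] hw w0; have [wL1 _] := (hgen.1 w).1 hw; have AL1 := (hgen.2 w hw).1.
have m1 (x : T) : `|-1| <= 1 :> R by rewrite normrN normr1.
suff : 0 <= \int[mu]_x (-1 * A w x) by rewrite RintegralZl// mulN1r oppr_ge0.
apply: (generator_mask_ge0 hgen hw (measurable_cst (-1 : R)) m1); near=> t.
have t_ge0 : 0 <= t by apply: ltW; near: t; exact: nbhs_right_gt.
have [SwL1 ISw] : L1 (S t w) /\ \int[mu]_x S t w x = \int[mu]_x w x.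
  have [hl _] := hst t t_ge0; split; first exact: (linear_op_L1 hl wL1).
  by have [] := stochastic_op_mass (hst t t_ge0) wL1 w0.
by split=> //; rewrite !RintegralZl// ISw mulN1r.
Unshelve. all: by end_near. Qed.

End semigroups.

Section resolvent_iteration.
Context d (T : measurableType d) (R : realType) (mu : {measure set T -> \bar R}).
Local Notation L1 := (L1 mu).
Variables (S0 : R -> Op T R) (D0 : set (T -> R)) (A0 : Op T R) (phi : T -> R)
  (P : Op T R) (DA : set (T -> R)) (A : Op T R) (S : R -> Op T R) (lambda : R)
  (Res : Op T R).
Hypotheses (hS0 : stochastic_semigroup mu S0) (hA0 : generator mu S0 D0 A0)
  (phi_meas : measurable_fun setT phi) (phi_ge0 : forall x, 0 <= phi x)
  (hP : stochastic_op mu P)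
  (hDA : forall u, DA u ->
     D0 u /\ L1 u /\ (\int[mu]_x (phi x * `|u x|)%:E < +oo)%E)
  (hA : forall u, DA u -> L1eq mu (A u) (fun x => A0 u x - phi x * u x))
  (hS : positive_contraction_semigroup mu S) (hgen : generator mu S DA A)
  (hlambda : 0 < lambda) (hRes : resolvent_of mu DA A lambda Res).

Local Notation K := (fun w => P (fun x => phi x * Res w x)).

Lemma resolvent_DA f : L1 f -> DA (Res f).
Proof. by case: hRes => _ [h _] /h[]. Qed.

Lemma L1_resolvent f : L1 f -> L1 (Res f).
Proof. by move=> /resolvent_DA /hDA[_ []]. Qed.

Lemma L1_phiM w : DA w -> L1 (fun x => phi x * w x).
Proof.
move=> hw; have [_ [wL1 wfin]] := hDA hw.
apply/integrableP; split.
  by apply/measurable_EFinP; apply: measurable_funM => //; exact: L1_measurable wL1.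
apply: le_lt_trans wfin; rewrite le_eqVlt; apply/orP; left; apply/eqP.
by apply: eq_integral => x _ /=; rewrite normrM (ger0_norm (phi_ge0 x)).
Qed.

Lemma resolvent_ge0 f : L1 f -> L1le mu (fun=> 0) f -> L1le mu (fun=> 0) (Res f).
Proof.
move=> hf f0; apply: (positive_contraction_generator_ge0 hgen hS hlambda).
  exact: resolvent_DA.
have [_ [h _]] := hRes; have /L1eqP := (h f hf).2.
by move/aeS2/(_ f0); apply=> x ->.
Qed.

Lemma positive_linear_resolvent : positive_linear_op mu Res.
Proof. by split; [case: hRes | exact: resolvent_ge0]. Qed.

Lemma Rintegral_phi_resolvent_le f : L1 f -> L1le mu (fun=> 0) f ->
  \int[mu]_x (phi x * Res f x) <= \int[mu]_x f x - lambda * \int[mu]_x Res f x.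
Proof.
move=> hf f0; have hw := resolvent_DA hf; have wL1 := L1_resolvent hf.
have [hD0 _] := hDA hw; have A0L1 := (hA0.2 _ hD0).1.
have IA0 := stochastic_generator_Rintegral_le0 hA0 hS0 hD0 (resolvent_ge0 hf f0).
have pwL1 := L1_phiM hw.
suff -> : \int[mu]_x f x = lambda * \int[mu]_x Res f x - \int[mu]_x A0 (Res f) x
    + \int[mu]_x (phi x * Res f x) by lra.
rewrite -RintegralZl// -RintegralB//; last exact: L1Z.
rewrite -RintegralD//; last by apply: L1B => //; exact: L1Z.
apply: Rintegral_ae_eq => //; first by apply: L1D => //; apply: L1B => //; exact: L1Z.
have [_ [h _]] := hRes; have /L1eqP fE := (h f hf).2; have /L1eqP AE := hA hw.
by apply/L1eqP; apply: (aeS2 fE AE) => x <- ->; ring.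
Qed.

Lemma positive_linear_phi_resolvent :
  positive_linear_op mu (fun u x => phi x * Res u x).
Proof.
have [hl _] := hRes; split; first split.
- by move=> u hu; apply: L1_phiM; exact: resolvent_DA.
- move=> u v hu hv /(linear_op_ae_eq hl hu hv)/L1eqP Ruv; apply/L1eqP.
  by apply: filterS Ruv => x /= ->.
- move=> a u v hu hv; apply/L1eqP.
  by apply: filterS (linear_op_lin hl a hu hv) => x ->; ring.
- move=> u hu u0; apply: filterS (resolvent_ge0 hu u0) => x.
  exact: mulr_ge0.
Qed.

Lemma substochastic_K : substochastic_op mu K.
Proof.
have [pP _] := stochastic_substochastic hP.
have hM := positive_linear_phi_resolvent.
split; first exact: (positive_linear_op_comp pP hM).
move=> u hu u0; have ML1 := linear_op_L1 hM.1 hu.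
rewrite (stochastic_op_mass hP ML1 (hM.2 _ hu u0)).2.
apply: le_trans (Rintegral_phi_resolvent_le hu u0) _.
rewrite gerBl; apply: mulr_ge0; first exact: ltW.
by apply: Rintegral_ae_ge0; [exact: L1_resolvent | exact: resolvent_ge0].
Qed.


Section iterates.
Variable v : T -> R.
Hypotheses (hv : L1 v) (v_gt0 : {ae mu, forall x, 0 < v x})
  (hPv : L1le mu (P (fun x => phi x * Res v x)) v).

Local Notation "'v_' n" := (iter n K v) (at level 8, n at level 2).
Local Notation "'g_' n" := (Res (iter n K v)) (at level 8, n at level 2).

Let hK := substochastic_K.

Lemma L1_iterK n : L1 (v_ n).
Proof. exact: (linear_op_L1 (substochastic_iter n hK).1.1 hv). Qed.

Lemma iterK_ge0 n : L1le mu (fun=> 0) (v_ n).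
Proof.
have v_ge0 : L1le mu (fun=> 0) v by apply: filterS v_gt0 => x /ltW.
exact: ((substochastic_iter n hK).1.2 _ hv v_ge0).
Qed.

Lemma iterK_decr n : L1le mu (v_ n.+1) (v_ n).
Proof.
elim: n => [|n IH]; first exact: hPv.
exact: (positive_op_le hK.1 (L1_iterK n.+1) (L1_iterK n) IH).
Qed.

Lemma iterK_le n : L1le mu (v_ n) v.
Proof.
elim: n => [|n IH]; first exact: aeW.
exact: aeS2 (iterK_decr n) IH (fun x => @le_trans _ _ _ _ _).
Qed.

Lemma Rintegral_iterKS n :
  \int[mu]_x v_ n.+1 x = \int[mu]_x (phi x * g_ n x).
Proof.
have hM := positive_linear_phi_resolvent.
have ML1 := linear_op_L1 hM.1 (L1_iterK n).
by rewrite iterS (stochastic_op_mass hP ML1 (hM.2 _ (L1_iterK n) (iterK_ge0 n))).2.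
Qed.

Lemma Rintegral_iterK_add_le n :
  \int[mu]_x v_ n x + lambda * n%:R * \int[mu]_x g_ n x <= \int[mu]_x v x.
Proof.
elim: n => [|n IH]; first by rewrite mulr0 mul0r addr0.
have := Rintegral_phi_resolvent_le (L1_iterK n) (iterK_ge0 n).
rewrite -Rintegral_iterKS => IvS.
have Ig_decr : \int[mu]_x g_ n.+1 x <= \int[mu]_x g_ n x.
  apply: Rintegral_ae_le; [exact: L1_resolvent (L1_iterK _)..|].
  exact: (positive_op_le positive_linear_resolvent (L1_iterK _) (L1_iterK _)
    (iterK_decr n)).
have : lambda * n.+1%:R * \int[mu]_x g_ n.+1 x <= lambda * n.+1%:R * \int[mu]_x g_ n x.
  by rewrite ler_wpM2l// mulr_ge0// ltW.
rewrite -natr1 mulrDr mulr1 mulrDl; lra.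
Qed.

Lemma L1_resolvent_iterK n : L1 (g_ n).
Proof. exact/L1_resolvent/L1_iterK. Qed.

Lemma resolvent_iterK_ge0 n : L1le mu (fun=> 0) (g_ n).
Proof. exact: resolvent_ge0 (L1_iterK n) (iterK_ge0 n). Qed.

Lemma Rintegral_resolvent_iterK_cvg0 : (fun n => \int[mu]_x g_ n x) @ \oo --> 0.
Proof.
apply: (@cvg0_le_harmonic _ _ (\int[mu]_x v x / lambda)) => n.
  exact: Rintegral_ae_ge0 (L1_resolvent_iterK n) (resolvent_iterK_ge0 n).
rewrite ler_pdivlMr// mulrC mulrA.
have := Rintegral_iterK_add_le n.
have := Rintegral_ae_ge0 (L1_iterK n) (iterK_ge0 n); lra.
Qed.

Local Notation tail k := (fun x => (fun x => phi x - k%:R)^\+ x * g_ 0 x).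

Lemma norm_tail_le k x : `|tail k x| <= `|phi x * g_ 0 x|.
Proof.
rewrite !normrM ler_wpM2r// !ger0_norm ?funrpos_ge0//.
by rewrite /funrpos ge_max phi_ge0 andbT lerBlDr lerDl.
Qed.

Lemma measurable_tail k : measurable_fun setT (tail k).
Proof.
apply: measurable_funM; last exact/L1_measurable/L1_resolvent_iterK.
by apply: measurable_funrpos; apply: measurable_funB.
Qed.

Lemma L1_tail k : L1 (tail k).
Proof.
exact: L1_le_norm (measurable_tail k) (L1_phiM (resolvent_DA hv)) (norm_tail_le k).
Qed.

Lemma Rintegral_iterKS_le n k : \int[mu]_x v_ n.+1 x <=
  k%:R * \int[mu]_x g_ n x + \int[mu]_x `|tail k x|.
Proof.
have gnL1 := L1_resolvent_iterK n.
rewrite Rintegral_iterKS -RintegralZl// -RintegralD//; last 2 first.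
- exact: L1Z.
- exact/L1_norm/L1_tail.
apply: Rintegral_ae_le; first exact/L1_phiM/resolvent_DA/L1_iterK.
  by apply: L1D; [exact: L1Z | exact/L1_norm/L1_tail].
have g_le : L1le mu (g_ n) (g_ 0).
  exact: (positive_op_le positive_linear_resolvent (L1_iterK n) hv (iterK_le n)).
apply: (aeS2 (resolvent_iterK_ge0 n) g_le) => x gn_ge0 gn_le.
rewrite -lerBlDl -mulrBl; apply: le_trans (ler_norm _).
apply: le_trans (ler_wpM2l (funrpos_ge0 _ _) gn_le).
by apply: ler_wpM2r => //; rewrite /funrpos le_max lexx.
Qed.

Lemma Rintegral_tail_cvg0 : (fun k => \int[mu]_x `|tail k x|) @ \oo --> 0.
Proof.
apply: dominated_cvg0 measurable_tail (L1_norm (L1_phiM (resolvent_DA hv)))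
  norm_tail_le _.
apply: aeW => x; apply: cvg_near_cst; near=> k.
rewrite /funrpos max_r ?mul0r// subr_le0.
by near: k; exact: nbhs_infty_ger.
Unshelve. all: by end_near. Qed.

Lemma Rintegral_iterK_cvg0 : (fun n => \int[mu]_x v_ n x) @ \oo --> 0.
Proof.
rewrite -cvg_shiftS; apply: (cvg0_le_natmul_add _ Rintegral_resolvent_iterK_cvg0
  Rintegral_tail_cvg0) => [n|]; last exact: Rintegral_iterKS_le.
exact: Rintegral_ae_ge0 (L1_iterK n.+1) (iterK_ge0 n.+1).
Qed.

End iterates.
End resolvent_iteration.

Theorem theorem3p2 (d : measure_display) (T : measurableType d) (R : realType)
  (mu : {measure set T -> \bar R}) (hmu : sigma_finite setT mu)
  (S0 : R -> Op T R) (D0 : set (T -> R)) (A0 : Op T R)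
  (hS0 : stochastic_semigroup mu S0) (hA0 : generator mu S0 D0 A0)
  (phi : T -> R) (phi_meas : measurable_fun setT phi)
  (phi_ge0 : forall x, 0 <= phi x)
  (P : Op T R) (hP : stochastic_op mu P)
  (DA : set (T -> R)) (A : Op T R)
  (hDA : forall u, DA u ->
     D0 u /\ L1 mu u /\
     (\int[mu]_x (phi x * `|u x|)%:E < +oo)%E)
  (hA : forall u, DA u -> L1eq mu (A u) (fun x => A0 u x - phi x * u x))
  (S : R -> Op T R) (hS : positive_contraction_semigroup mu S)
  (hgen : generator mu S DA A)
  (lambda : R) (hlambda : 0 < lambda)
  (Res : Op T R) (hRes : resolvent_of mu DA A lambda Res)
  (v : T -> R) (hv : L1 mu v) (hvpos : {ae mu, forall x, 0 < v x})
  (hPv : L1le mu (P (fun x => phi x * Res v x)) v) :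
  forall u, L1 mu u ->
    (fun n : nat =>
       L1norm mu (iter n (fun w => P (fun x => phi x * Res w x)) u))
      @ \oo --> 0%E.
Proof.
move=> u hu.
have hK := substochastic_K hS0 hA0 phi_meas phi_ge0 hP hDA hA hS hgen hlambda hRes.
have Kv0 := Rintegral_iterK_cvg0 hS0 hA0 phi_meas phi_ge0 hP hDA hA hS hgen
  hlambda hRes hv hvpos hPv.
have Ku0 := substochastic_iter_cvg0 hK hv hvpos Kv0 hu.
rewrite (_ : (fun n => _) = fun n =>
    (\int[mu]_x `|iter n (fun w => P (fun x => phi x * Res w x)) u x|)%:E).
  by apply: cvg_EFin; [exact: nearW | exact: Ku0].
apply/funext => n; rewrite L1norm_Rintegral//.
exact: (linear_op_L1 (substochastic_iter n hK).1.1 hu).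
Qed.
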